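(* Let $C$ be a binary linear $[n,k]$ code whose hull $\mathrm{Hull}(C)=C\cap C^{\perp}$ has dimension $\ell$, where $0\le\ell\le k$. Let $G$ be a $k\times n$ generator matrix of $C$ with rows $\mathbf r_1,\dots,\mathbf r_k$ and $H$ an $(n-k)\times n$ parity check matrix of $C$ with rows $\mathbf s_1,\dots,\mathbf s_{n-k}$. Suppose $\mathbf x=(x_1,\dots,x_n)\in\mathbb F_2^n$ satisfies $\mathbf x\cdot\mathbf x=0$. Put $y_i=\mathbf x\cdot\mathbf r_i$ ($1\le i\le k$) and $z_j=\mathbf x\cdot\mathbf s_j$ ($1\le j\le n-k$). Then: (a) the matrix \[ G_2=\begin{bmatrix} 1 & 1 & x_1\ \cdots\ x_n\\ y_1 & 0 & \mathbf r_1\\ \vdots & \vdots & \vdots\\ y_k & 0 & \mathbf r_k\end{bmatrix} \] generates a binary linear $[n+2,k+1]$ code $C_2$ whose hull has dimension $\ell$, $\ell+1$ or $\ell+2$. More precisely: if $y_i=0$ for all $1\le i\le k$, then the hull of $C_2$ has dimension $\ell+1$; if $y_i\neq 0$ for some $1\le i\le k$, then the hull of $C_2$ has dimension $\ell$, $\ell+1$, or $\ell+2$. (b) the matrix \[ H_2=\begin{bmatrix} 1 & 1 & x_1\ \cdots\ x_n\\ 0 & z_1 & \mathbf s_1\\ \vdots & \vdots & \vdots\\ 0 & z_{n-k} & \mathbf s_{n-k}\end{bmatrix} \] is a parity check matrix for $C_2$.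
   Context: All codes are binary linear codes; the dual is taken with respect to the standard dot product on $\mathbb F_2^n$, and $\mathrm{Hull}(C)=C\cap C^{\perp}$. A parity check matrix of $C$ is a generator matrix of $C^{\perp}$. The case where all $y_i=0$ is called Construction II; the case where some $y_i\ne 0$ is called Construction III. *)

From HB Require Import structures.
From mathcomp Require Import all_boot all_order all_algebra.
Set Implicit Arguments. Unset Strict Implicit. Unset Printing Implicit Defensive.
Import GRing.Theory.
Local Open Scope ring_scope.

(* Binary linear codes of length n are represented by matrices over 'F_2
   whose row space is the code.  Standard dot product on F_2^n. *)
Definition dot (n : nat) (u v : 'rV['F_2]_n) : 'F_2 := (u *m v^T) 0 0.

Definition dualmx (m n : nat) (A : 'M['F_2]_(m, n)) : 'M['F_2]_n := kermx A^T.

Definition hullmx (m n : nat) (A : 'M['F_2]_(m, n)) : 'M['F_2]_n :=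
  (A :&: dualmx A)%MS.

Definition ones2 : 'rV['F_2]_2 := \row_(j < 2) 1.

Definition G2mx (n k : nat) (G : 'M['F_2]_(k, n)) (x : 'rV['F_2]_n)
  : 'M['F_2]_(1 + k, 2 + n) :=
  col_mx (row_mx ones2 x)
         (row_mx (row_mx (\col_(i < k) dot x (row i G)) (0 : 'cV_k)) G).

Definition H2mx (n r : nat) (H : 'M['F_2]_(r, n)) (x : 'rV['F_2]_n)
  : 'M['F_2]_(1 + r, 2 + n) :=
  col_mx (row_mx ones2 x)
         (row_mx (row_mx (0 : 'cV_r) (\col_(j < r) dot x (row j H))) H).

From mathcomp Require Import all_boot all_order all_algebra.
From mathcomp Require Import zify.

(* For A of full row rank, Hull(A) is the part of the row space killed by A^T,
   so its dimension is #rows - rank (A A^T).  Since x.x = 0 and 1 + 1 = 0 over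
   F_2, the Gram matrix of G_2 is diag(0, Y Y^T + G G^T) with Y = G x^T; the
   rank of Y Y^T is at most 1, so the hull dimension (k+1) - rank (Y Y^T + G G^T)
   differs from l + 1 = (k+1) - rank (G G^T) by at most 1, and equals it when
   Y = 0.  For (b), the same cancellations give H_2 G_2^T = 0, and H_2 has full
   rank n + 1 - k = (n + 2) - (k + 1). *)

Set Implicit Arguments.
Unset Strict Implicit.
Unset Printing Implicit Defensive.

Import GRing.Theory.
Local Open Scope ring_scope.

Section BlockProducts.
Variable R : pzRingType.

Lemma row_mx_mul_tr m n1 n2 p (A1 : 'M[R]_(m, n1)) (A2 : 'M_(m, n2))
    (B1 : 'M_(p, n1)) (B2 : 'M_(p, n2)) :
  row_mx A1 A2 *m (row_mx B1 B2)^T = A1 *m B1^T + A2 *m B2^T.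
Proof. by rewrite tr_row_mx mul_row_col. Qed.

Lemma col_mx_mul_tr m1 m2 n p1 p2 (A1 : 'M[R]_(m1, n)) (A2 : 'M_(m2, n))
    (B1 : 'M_(p1, n)) (B2 : 'M_(p2, n)) :
  col_mx A1 A2 *m (col_mx B1 B2)^T =
  block_mx (A1 *m B1^T) (A1 *m B2^T) (A2 *m B1^T) (A2 *m B2^T).
Proof. by rewrite tr_col_mx mul_col_row. Qed.

End BlockProducts.

Section FieldRanks.
Variable F : fieldType.

Lemma mxrank_add_ge m n (A B : 'M[F]_(m, n)) :
  (\rank B <= \rank (A + B)%R + \rank A)%N.
Proof.
by have := mxrank_add (B + A) (- A); rewrite addrK mxrank_opp (addrC B A).
Qed.

Lemma row_free_col_row_mx m n1 n2 (a : 'rV[F]_n1) (u : 'rV_n2)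
    (P : 'M_(m, n1)) (Q : 'M_(m, n2)) (j : 'I_n1) :
  a 0 j != 0 -> (forall i, P i j = 0) -> row_free Q ->
  row_free (col_mx (row_mx a u) (row_mx P Q)).
Proof.
move=> aj_neq0 Pj0 freeQ; apply: inj_row_free => v.
rewrite -[v]hsubmxK; move: (lsubmx v) (rsubmx v) => b w.
rewrite mul_row_col !mul_mx_row add_row_mx -row_mx0 => /eq_row_mx[left0 right0].
have b0 : b = 0.
  apply/rowP => i; rewrite ord1 mxE.
  have /matrixP/(_ 0 j) := left0; rewrite !mxE big_ord1 big1 => [|i' _].
    by rewrite addr0 => /eqP; rewrite mulf_eq0 (negbTE aj_neq0) orbF => /eqP.
  by rewrite Pj0 mulr0.
move: right0; rewrite b0 mul0mx add0r -(mul0mx _ Q) => /(row_free_inj freeQ) ->.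
by rewrite row_mx0.
Qed.

End FieldRanks.

Lemma addmx_F2_self m n (A : 'M['F_2]_(m, n)) : A + A = 0.
Proof.
by apply/matrixP => i j; rewrite !mxE addrr_pchar2 // pchar_Fp.
Qed.

Lemma dot_self_mx n (x : 'rV['F_2]_n) : dot x x = 0 -> x *m x^T = 0.
Proof. by move=> xx0; apply/rowP => i; rewrite ord1 [RHS]mxE. Qed.

Lemma col_dot_row k n (G : 'M['F_2]_(k, n)) (x : 'rV_n) :
  \col_(i < k) dot x (row i G) = G *m x^T.
Proof.
apply/colP => i; rewrite /dot !mxE; apply: eq_bigr => j _.
by rewrite !mxE mulrC.
Qed.

Lemma ones2E : ones2 = row_mx 1 1.
Proof.
by apply/rowP => j; rewrite !mxE; case: splitP => j' _; rewrite ord1 mxE.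
Qed.

Lemma ones2_mul_tr p (a b : 'cV['F_2]_p) :
  ones2 *m (row_mx a b : 'M_(p, 2))^T = a^T + b^T.
Proof. by rewrite ones2E (row_mx_mul_tr (1 : 'M_1) 1 a b) !mul1mx. Qed.

Lemma mul_tr_ones2 p (a b : 'cV['F_2]_p) :
  (row_mx a b : 'M_(p, 2)) *m ones2^T = a + b.
Proof. by rewrite -[LHS]trmxK trmx_mul trmxK ones2_mul_tr raddfD /= !trmxK. Qed.

Lemma ones2_mul_tr_ones2 : ones2 *m ones2^T = 0.
Proof. by rewrite {2}ones2E ones2_mul_tr trmx1 addmx_F2_self. Qed.

Lemma mxrank_hullmx m n (A : 'M['F_2]_(m, n)) :
  row_free A -> \rank (hullmx A) = (m - \rank (A *m A^T))%N.
Proof.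
move=> freeA; apply/eqP; rewrite -(eqn_add2l (\rank (A *m A^T))).
by rewrite mxrank_mul_ker subnKC ?rank_leq_row.
Qed.

Lemma mxrank_dualmx m n (A : 'M['F_2]_(m, n)) :
  \rank (dualmx A) = (n - \rank A)%N.
Proof. by rewrite /dualmx mxrank_ker mxrank_tr. Qed.

Lemma eqmx_dualmx m p n (A : 'M['F_2]_(m, n)) (B : 'M_(p, n)) :
  B *m A^T = 0 -> (\rank B + \rank A = n)%N -> (B == dualmx A)%MS.
Proof.
move=> /sub_kermxP BA0 rankBA; apply/andP; split=> //.
by rewrite -(mxrank_leqif_sup BA0).2 mxrank_dualmx; apply/eqP; lia.
Qed.

Section Construction.
Variables (n k : nat) (G : 'M['F_2]_(k, n)) (x : 'rV['F_2]_n).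
Hypothesis xx0 : dot x x = 0.

Let Y := G *m x^T.

Lemma G2mx_gram :
  G2mx G x *m (G2mx G x)^T = block_mx 0 0 0 (Y *m Y^T + G *m G^T).
Proof.
have xG : x *m G^T = Y^T by rewrite trmx_mul trmxK.
rewrite /G2mx col_dot_row col_mx_mul_tr !row_mx_mul_tr.
rewrite ones2_mul_tr ones2_mul_tr_ones2 mul_tr_ones2 (row_mx_mul_tr Y 0).
by rewrite (dot_self_mx xx0) xG !trmx0 mulmx0 !addr0 !addmx_F2_self.
Qed.

Lemma row_free_G2mx : row_free G -> row_free (G2mx G x).
Proof.
apply: (@row_free_col_row_mx _ _ _ _ _ _ _ _ 1); first by rewrite mxE oner_neq0.
by move=> i; rewrite mxE; case: splitP => j; rewrite ord1 // mxE.
Qed.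

Lemma mxrank_hullmx_G2mx : row_free G ->
  \rank (hullmx (G2mx G x)) = (k.+1 - \rank (Y *m Y^T + G *m G^T)%R)%N.
Proof.
move=> /row_free_G2mx freeG2.
by rewrite mxrank_hullmx // G2mx_gram rank_diag_block_mx mxrank0.
Qed.

Lemma mxrank_hullmx_G2mx_orthogonal : row_free G ->
  (forall i, dot x (row i G) = 0) ->
  \rank (hullmx (G2mx G x)) = (\rank (hullmx G)).+1.
Proof.
move=> freeG xG0; have Y0 : Y = 0.
  by rewrite /Y -col_dot_row; apply/colP => i; rewrite !mxE xG0.
rewrite mxrank_hullmx_G2mx // mxrank_hullmx // Y0 mul0mx add0r.
by rewrite subSn ?rank_leq_row.
Qed.

Lemma mxrank_hullmx_G2mx_bounds : row_free G ->
  (\rank (hullmx G) <= \rank (hullmx (G2mx G x)) <= (\rank (hullmx G)).+2)%N.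
Proof.
move=> freeG; rewrite mxrank_hullmx_G2mx // mxrank_hullmx //.
have : (\rank (Y *m Y^T) <= 1)%N.
  exact: leq_trans (mxrankM_maxl _ _) (rank_leq_col _).
have := mxrank_add (Y *m Y^T) (G *m G^T).
have := mxrank_add_ge (Y *m Y^T) (G *m G^T).
have := rank_leq_row (G *m G^T).
set s := \rank (_ + _)%R; set g := \rank (G *m G^T); set y := \rank (Y *m Y^T).
lia.
Qed.

Variables (r : nat) (H : 'M['F_2]_(r, n)).

Lemma row_free_H2mx : row_free H -> row_free (H2mx H x).
Proof.
apply: (@row_free_col_row_mx _ _ _ _ _ _ _ _ 0); first by rewrite mxE oner_neq0.
by move=> i; rewrite mxE; case: splitP => j; rewrite ord1 // mxE.
Qed.

Lemma H2mx_mul_trG2mx : H *m G^T = 0 -> H2mx H x *m (G2mx G x)^T = 0.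
Proof.
move=> HG0; have xG : x *m G^T = Y^T by rewrite trmx_mul trmxK.
rewrite /H2mx /G2mx !col_dot_row col_mx_mul_tr !row_mx_mul_tr.
rewrite ones2_mul_tr ones2_mul_tr_ones2 mul_tr_ones2.
rewrite (row_mx_mul_tr (0 : 'cV_r) (H *m x^T)).
rewrite (dot_self_mx xx0) xG HG0 !trmx0 !mulmx0 mul0mx.
by rewrite !addr0 !add0r !addmx_F2_self block_mx0.
Qed.

End Construction.

Theorem theorem2 (n k l : nat) (G : 'M['F_2]_(k, n)) (H : 'M['F_2]_(n - k, n))
  (x : 'rV['F_2]_n) :
  row_free G ->                         (* G is a generator matrix of an [n,k] code C *)
  row_free H -> (H == dualmx G)%MS ->   (* H is a parity check matrix of C *)
  \rank (hullmx G) = l ->               (* dim Hull(C) = l *)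
  dot x x = 0 ->
  (* (a) *)
  (\rank (G2mx G x) = k + 1)%N /\
  ((forall i : 'I_k, dot x (row i G) = 0) -> \rank (hullmx (G2mx G x)) = (l + 1)%N) /\
  ((exists i : 'I_k, dot x (row i G) != 0) ->
     [\/ \rank (hullmx (G2mx G x)) = l,
         \rank (hullmx (G2mx G x)) = (l + 1)%N |
         \rank (hullmx (G2mx G x)) = (l + 2)%N]) /\
  (* (b) *)
  (row_free (H2mx H x) /\ (H2mx H x == dualmx (G2mx G x))%MS).
Proof.
move=> freeG freeH /andP[/sub_kermxP HG0 _] hullG xx0.
have freeG2 := row_free_G2mx x freeG.
have freeH2 := row_free_H2mx x freeH.
split; first by rewrite (eqP freeG2) addn1.
split; first by rewrite -hullG addn1; exact: mxrank_hullmx_G2mx_orthogonal.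
split.
  move=> _; have := mxrank_hullmx_G2mx_bounds xx0 freeG; rewrite hullG.
  set h := \rank _ => bounds.
  by case: (ltngtP h l.+1) => ?; [apply: Or31 | apply: Or33 | apply: Or32]; lia.
split=> //; apply: eqmx_dualmx; first exact: H2mx_mul_trG2mx.
have : (k <= n)%N by rewrite -(eqP freeG) rank_leq_col.
by rewrite (eqP freeH2) (eqP freeG2); lia.
Qed.
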